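(* Let $\mathbb{X},\mathbb{Y}$ be real normed linear spaces, $1\le p<\infty$, and $\mathbb{Z}=\mathbb{X}\oplus_p\mathbb{Y}$. Let $z_1=(x_1,y_1)$, $z_2=(x_2,y_2)\in\mathbb{Z}$ with $x_1,x_2\in\mathbb{X}\setminus\{0\}$ and $y_1,y_2\in\mathbb{Y}\setminus\{0\}$. (i) If $(z_1,z_2)$ is a parallel pair in $\mathbb{Z}$, then $(x_1,x_2)$ is a parallel pair in $\mathbb{X}$ and $(y_1,y_2)$ is a parallel pair in $\mathbb{Y}$. (ii) If $(z_1,z_2)$ is a TEA pair in $\mathbb{Z}$, then $(x_1,x_2)$ is a TEA pair in $\mathbb{X}$ and $(y_1,y_2)$ is a TEA pair in $\mathbb{Y}$.
   Context: For $1\le p<\infty$, $\mathbb{X}\oplus_p\mathbb{Y}$ is $\mathbb{X}\times\mathbb{Y}$ with norm $\|(x,y)\|=(\|x\|^p+\|y\|^p)^{1/p}$. $(x,y)$ is a parallel pair if $\|x+\lambda y\|=\|x\|+\|y\|$ for some scalar $\lambda$ with $|\lambda|=1$; $(x,y)$ is a TEA pair if $\|x+y\|=\|x\|+\|y\|$. *)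

From HB Require Import structures.
From mathcomp Require Import all_boot all_order all_algebra.
From mathcomp Require Import all_classical all_reals all_analysis.
Set Implicit Arguments. Unset Strict Implicit. Unset Printing Implicit Defensive.
Import Order.TTheory GRing.Theory Num.Theory.
Import numFieldNormedType.Exports.
Local Open Scope ring_scope.

Definition parallel_pair (R : realType) (V : normedModType R) (x y : V) : Prop :=
  exists lam : R, `|lam| = 1 /\ `|x + lam *: y| = `|x| + `|y|.

Definition TEA_pair (R : realType) (V : normedModType R) (x y : V) : Prop :=
  `|x + y| = `|x| + `|y|.

Definition psum_norm (R : realType) (X Y : normedModType R) (p : R)
  (z : X * Y) : R := (`|z.1| `^ p + `|z.2| `^ p) `^ p^-1.

Definition parallel_pair_p (R : realType) (X Y : normedModType R) (p : R)
  (z w : X * Y) : Prop :=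
  exists lam : R, `|lam| = 1 /\
    psum_norm p (z.1 + lam *: w.1, z.2 + lam *: w.2) = psum_norm p z + psum_norm p w.

Definition TEA_pair_p (R : realType) (X Y : normedModType R) (p : R)
  (z w : X * Y) : Prop :=
  psum_norm p (z.1 + w.1, z.2 + w.2) = psum_norm p z + psum_norm p w.

(* Write N(u, v) = (u^p + v^p)^(1/p) for the l^p norm of a pair of nonnegative
   reals, so that the norm of X (+)_p Y is N(|x|, |y|).  N is strictly
   increasing in each argument and satisfies Minkowski's inequality.  If
   N(|x1 + x2|, |y1 + y2|) = N(|x1|, |y1|) + N(|x2|, |y2|), then
   N(|x1|, |y1|) + N(|x2|, |y2|) >= N(|x1| + |x2|, |y1| + |y2|) by Minkowski,
   while a strict triangle inequality in either component would make the left
   side strictly smaller than the middle one.  A parallel pair reduces to a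
   TEA pair after scaling the second vector by lam, which preserves norms. *)

From HB Require Import structures.
From mathcomp Require Import all_boot all_order all_algebra.
From mathcomp Require Import all_classical all_reals all_analysis.
From mathcomp Require Import lra.
Set Implicit Arguments. Unset Strict Implicit. Unset Printing Implicit Defensive.
Import Order.TTheory GRing.Theory Num.Theory.
Import numFieldNormedType.Exports.
Local Open Scope ring_scope.

Section PNorm2.
Variable R : realType.

Definition pnorm2 (p u v : R) : R := (u `^ p + v `^ p) `^ p^-1.

Lemma pnorm2_ge0 (p u v : R) : 0 <= pnorm2 p u v.
Proof. exact: powR_ge0. Qed.

Lemma pnorm2_lt (p a1 a2 b1 b2 : R) : 0 < p ->
  0 <= a1 -> 0 <= b1 -> a1 <= a2 -> b1 <= b2 -> (a1 < a2) || (b1 < b2) ->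
  pnorm2 p a1 b1 < pnorm2 p a2 b2.
Proof.
move=> p0 a10 b10 a12 b12 lt12.
have a20 : 0 <= a2 by exact: le_trans a12.
have b20 : 0 <= b2 by exact: le_trans b12.
have le_pow u v : 0 <= u -> u <= v -> u `^ p <= v `^ p.
  by move=> u0 uv; apply: (ge0_ler_powR (ltW p0)); rewrite // nnegrE (le_trans u0).
have lt_pow u v : 0 <= u -> u < v -> u `^ p < v `^ p.
  by move=> u0 uv; apply: (gt0_ltr_powR p0); rewrite // nnegrE (le_trans u0) ?ltW.
rewrite /pnorm2; apply: gt0_ltr_powR; rewrite ?invr_gt0 ?nnegrE ?addr_ge0 ?powR_ge0 //.
case/orP: lt12 => [a_lt|b_lt].
- by apply: ltr_leD; [exact: lt_pow | exact: le_pow].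
- by apply: ler_ltD; [exact: le_pow | exact: lt_pow].
Qed.

Lemma pnorm2D (p a1 a2 b1 b2 : R) : 1 <= p ->
  0 <= a1 -> 0 <= a2 -> 0 <= b1 -> 0 <= b2 ->
  pnorm2 p (a1 + a2) (b1 + b2) <= pnorm2 p a1 b1 + pnorm2 p a2 b2.
Proof.
move=> p_ge1 a10 a20 b10 b20; have p0 : 0 < p by exact: lt_le_trans p_ge1.
have [->|p_neq1] := eqVneq p 1.
  by rewrite /pnorm2 invr1 !powRr1 ?addr_ge0 //; lra.
have p_gt1 : 1 < p by rewrite lt_neqAle eq_sym p_neq1.
pose q := p / (p - 1).
have q0 : 0 < q by rewrite divr_gt0 // subr_gt0.
have pq_conj : p^-1 + q^-1 = 1.
  by rewrite /q invf_div -{1}(div1r p) -mulrDl subrKC mulfV // gt_eqF.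
have pq_mul : (p - 1) * q = p by rewrite /q mulrCA mulfV ?mulr1 // gt_eqF // subr_gt0.
set A := a1 + a2; set B := b1 + b2; set S := A `^ p + B `^ p.
(* S = sum_i (a_i A^(p-1) + b_i B^(p-1)); Hoelder bounds the i-th term by
   N(a_i, b_i) * S^(1/q), since (A^(p-1))^q = A^p. *)
have hoelder_term a b : 0 <= a -> 0 <= b ->
    a * A `^ (p - 1) + b * B `^ (p - 1) <= pnorm2 p a b * S `^ q^-1.
  have powq c : c `^ p = (c `^ (p - 1)) `^ q by rewrite -powRrM pq_mul.
  by move=> a0 b0; rewrite /S (powq A) (powq B); apply: hoelder2; rewrite ?powR_ge0.
have S_le : S <= (pnorm2 p a1 b1 + pnorm2 p a2 b2) * S `^ q^-1.
  have S_split : S = (a1 * A `^ (p - 1) + b1 * B `^ (p - 1))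
              + (a2 * A `^ (p - 1) + b2 * B `^ (p - 1)).
    rewrite /S -(mulr_powRB1 (x := A)) ?addr_ge0 // -(mulr_powRB1 (x := B)) ?addr_ge0 //.
    by rewrite {1}/A {1}/B mulrDl (mulrDl b1) addrACA.
  by rewrite {1}S_split mulrDl; apply: lerD; apply: hoelder_term.
have [S_eq0|S_neq0] := eqVneq S 0.
  by rewrite /pnorm2 -/A -/B -/S S_eq0 powR0 ?addr_ge0 ?pnorm2_ge0 // invr_eq0 gt_eqF.
have Sq_gt0 : 0 < S `^ q^-1.
  by rewrite powR_gt0 // lt_neqAle eq_sym S_neq0 addr_ge0 ?powR_ge0.
rewrite -(ler_pM2r Sq_gt0) /pnorm2 -/A -/B -/S -powRD ?S_neq0 ?implybT //.
by rewrite pq_conj powRr1 // addr_ge0 ?powR_ge0.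
Qed.

Lemma pnorm2_additive_eq (p u v a1 a2 b1 b2 : R) : 1 <= p ->
  0 <= u -> 0 <= v -> 0 <= a1 -> 0 <= a2 -> 0 <= b1 -> 0 <= b2 ->
  u <= a1 + a2 -> v <= b1 + b2 ->
  pnorm2 p u v = pnorm2 p a1 b1 + pnorm2 p a2 b2 ->
  u = a1 + a2 /\ v = b1 + b2.
Proof.
move=> p_ge1 u0 v0 a10 a20 b10 b20 ua vb uv_eq.
have p0 : 0 < p by exact: lt_le_trans p_ge1.
have [ua_lt|] := boolP ((u < a1 + a2) || (v < b1 + b2)).
  have := pnorm2D p_ge1 a10 a20 b10 b20.
  by rewrite -uv_eq leNgt (pnorm2_lt p0 u0 v0 ua vb ua_lt).
by rewrite negb_or -!leNgt => /andP[au bv]; split; apply/eqP; rewrite eq_le ?ua ?vb.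
Qed.

End PNorm2.

Lemma psum_normE (R : realType) (X Y : normedModType R) p (z : X * Y) :
  psum_norm p z = pnorm2 p `|z.1| `|z.2|.
Proof. by []. Qed.

Lemma TEA_pair_p_split (R : realType) (X Y : normedModType R) p (z w : X * Y) :
  1 <= p -> TEA_pair_p p z w -> TEA_pair z.1 w.1 /\ TEA_pair z.2 w.2.
Proof.
move=> p_ge1; rewrite /TEA_pair_p /TEA_pair !psum_normE /=.
by apply: pnorm2_additive_eq; rewrite ?ler_normD.
Qed.

Lemma parallel_pairE (R : realType) (V : normedModType R) (x y : V) :
  parallel_pair x y <-> exists lam : R, `|lam| = 1 /\ TEA_pair x (lam *: y).
Proof.
by split=> -[lam [lam1 E]]; exists lam; split; first exact: lam1;
  move: E; rewrite /TEA_pair normrZ lam1 mul1r.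
Qed.

Lemma parallel_pair_pE (R : realType) (X Y : normedModType R) p (z w : X * Y) :
  parallel_pair_p p z w <->
  exists lam : R, `|lam| = 1 /\ TEA_pair_p p z (lam *: w.1, lam *: w.2).
Proof.
by split=> -[lam [lam1 E]]; exists lam; split; first exact: lam1;
  move: E; rewrite /TEA_pair_p !psum_normE /= !normrZ lam1 !mul1r.
Qed.

Theorem mainTheorem4 (R : realType) (X Y : normedModType R) (p : R)
  (x1 x2 : X) (y1 y2 : Y) :
  1 <= p -> x1 != 0 -> x2 != 0 -> y1 != 0 -> y2 != 0 ->
  (parallel_pair_p p (x1, y1) (x2, y2) ->
     parallel_pair x1 x2 /\ parallel_pair y1 y2) /\
  (TEA_pair_p p (x1, y1) (x2, y2) ->
     TEA_pair x1 x2 /\ TEA_pair y1 y2).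
Proof.
move=> p_ge1 _ _ _ _; split; last exact: TEA_pair_p_split.
case/parallel_pair_pE=> lam [lam1 /(TEA_pair_p_split p_ge1) /= [Ex Ey]].
split; apply/parallel_pairE; exists lam.
- exact: (conj lam1 Ex).
- exact: (conj lam1 Ey).
Qed.
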